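(* Let $(Q,\cdot)$ and $(Q,\ast)$ be right modular magmas on the same set $Q$, where $(Q,\cdot)$ has a left unit $e$ and $(Q,\ast)$ has a left unit $\overline{e}$. Then $(Q,\cdot,\ast)$ is a double magma, i.e. $(x\cdot y)\ast(z\cdot w)=(x\ast z)\cdot(y\ast w)$ for all $x,y,z,w\in Q$, if and only if there is an involutive automorphism $\alpha$ of $(Q,\ast)$ such that $x\ast y=\alpha x\cdot y$ for all $x,y\in Q$. In this case $\alpha x=(x\ast\overline{e})\cdot\overline{e}=(x\cdot\overline{e})\ast\overline{e}$ for all $x\in Q$.
   Context: A magma $(Q,\cdot)$ is right modular if $(xy)z=(zy)x$ for all $x,y,z\in Q$. An element $l$ is a left unit of a magma if $lx=x$ for all $x$. A mapping $\alpha:Q\to Q$ is involutive if $\alpha\circ\alpha$ is the identity map of $Q$. *)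

Definition right_modular {Q : Type} (m : Q -> Q -> Q) : Prop :=
  forall x y z, m (m x y) z = m (m z y) x.
Definition left_unit {Q : Type} (m : Q -> Q -> Q) (l : Q) : Prop :=
  forall x, m l x = x.
Definition involutive_map {Q : Type} (a : Q -> Q) : Prop :=
  forall x, a (a x) = x.
Definition magma_automorphism {Q : Type} (m : Q -> Q -> Q) (a : Q -> Q) : Prop :=
  (forall x y, a (m x y) = m (a x) (a y)) /\
  (exists b : Q -> Q, (forall x, b (a x) = x) /\ (forall x, a (b x) = x)).
Definition double_magma {Q : Type} (dot ast : Q -> Q -> Q) : Prop :=
  forall x y z w, ast (dot x y) (dot z w) = dot (ast x z) (ast y w).

From Stdlib Require Import Setoid.

(* The interchange law forces the two left units to coincide; call the common
   unit u.  Interchanging with u in two of the four places gives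
   (x.u)*w = (x*u).w, and since x |-> x.u is an involution of a right modular
   magma with left unit u, this says x*w = a x . w for a x := (x.u)*u.  The
   map a is an involutive automorphism of * by the same two facts applied to *.
   Conversely, such an a is also an endomorphism of ., and the interchange law
   becomes the mediality of the right modular magma (Q, .). *)

Section RightModular.

Variables (Q : Type) (m : Q -> Q -> Q).
Hypothesis Hm : right_modular m.

Lemma right_modular_medial x y z w : m (m x y) (m z w) = m (m x z) (m y w).
Proof. rewrite Hm, (Hm z w y), Hm. reflexivity. Qed.

Variable u : Q.
Hypothesis Hu : left_unit m u.

Lemma right_modular_mul_unitK x : m (m x u) u = x.
Proof. rewrite Hm, !Hu. reflexivity. Qed.

Lemma right_modular_mulC_unit x y : m x y = m (m y x) u.
Proof. rewrite <- Hm, Hu. reflexivity. Qed.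

Lemma right_modular_left_unit_unique c : left_unit m c -> c = u.
Proof. intro Hc. rewrite <- (right_modular_mul_unitK c), Hc, Hu. reflexivity. Qed.

End RightModular.

Lemma double_magma_sym (Q : Type) (dot ast : Q -> Q -> Q) :
  double_magma dot ast -> double_magma ast dot.
Proof. intros Hdm x y z w. rewrite Hdm. reflexivity. Qed.

Lemma double_magma_unit_idem (Q : Type) (dot ast : Q -> Q -> Q) (e ebar : Q) :
  right_modular dot -> left_unit dot e -> left_unit ast ebar ->
  double_magma dot ast -> ast e e = e.
Proof.
  intros Hdot He Hebar Hdm.
  apply (right_modular_left_unit_unique _ _ Hdot _ He).
  intro w.
  rewrite <- (Hebar w) at 1.
  rewrite <- Hdm, !He.
  apply Hebar.
Qed.

Lemma double_magma_units_eq (Q : Type) (dot ast : Q -> Q -> Q) (e ebar : Q) :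
  right_modular dot -> right_modular ast ->
  left_unit dot e -> left_unit ast ebar ->
  double_magma dot ast -> ebar = e.
Proof.
  intros Hdot Hast He Hebar Hdm.
  assert (Hee : ast e e = e) by exact (double_magma_unit_idem _ _ _ _ _ Hdot He Hebar Hdm).
  assert (Hbb : dot ebar ebar = ebar)
    by exact (double_magma_unit_idem _ _ _ _ _ Hast Hebar He (double_magma_sym _ _ _ Hdm)).
  assert (Heb : ast e ebar = e).
  { rewrite <- Hee at 1. rewrite <- (right_modular_mulC_unit _ _ Hast _ Hebar). exact Hee. }
  assert (Hbe : dot ebar e = ebar).
  { rewrite <- Hbb at 1. rewrite <- (right_modular_mulC_unit _ _ Hdot _ He). exact Hbb. }
  (* ebar = (ebar.e)*(e.ebar) = (ebar*e).(e*ebar) = e.e = e *)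
  transitivity (ast (dot ebar e) (dot e ebar)).
  - rewrite Hbe, He, Hebar. reflexivity.
  - rewrite Hdm, Hebar, Heb. apply He.
Qed.

Section Twist.

Variables (Q : Type) (dot ast : Q -> Q -> Q).

Lemma twist_morph_dot (alpha : Q -> Q) :
  (forall x y, alpha (ast x y) = ast (alpha x) (alpha y)) -> involutive_map alpha ->
  (forall x y, ast x y = dot (alpha x) y) ->
  forall x y, alpha (dot x y) = dot (alpha x) (alpha y).
Proof.
  intros Hmorph Hinv Htw x y.
  rewrite <- (Hinv x) at 1.
  rewrite <- Htw, Hmorph, Hinv.
  apply Htw.
Qed.

Lemma double_magma_of_twist (alpha : Q -> Q) :
  right_modular dot ->
  (forall x y, alpha (ast x y) = ast (alpha x) (alpha y)) -> involutive_map alpha ->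
  (forall x y, ast x y = dot (alpha x) y) -> double_magma dot ast.
Proof.
  intros Hdot Hmorph Hinv Htw x y z w.
  rewrite !Htw, (twist_morph_dot alpha Hmorph Hinv Htw).
  apply (right_modular_medial _ _ Hdot).
Qed.

Definition twist (u x : Q) : Q := ast (dot x u) u.

Variable u : Q.
Hypotheses (Hdot : right_modular dot) (Hast : right_modular ast).
Hypotheses (Hu_dot : left_unit dot u) (Hu_ast : left_unit ast u).
Hypothesis Hdm : double_magma dot ast.

Lemma double_magma_mul_unit x w : ast (dot x u) w = dot (ast x u) w.
Proof. rewrite <- (Hu_dot w) at 1. rewrite Hdm, Hu_ast. reflexivity. Qed.

Lemma ast_twist x y : ast x y = dot (twist u x) y.
Proof.
  rewrite <- (right_modular_mul_unitK _ _ Hdot _ Hu_dot x) at 1.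
  apply double_magma_mul_unit.
Qed.

Lemma twist_involutive : involutive_map (twist u).
Proof.
  intro x. unfold twist at 1.
  rewrite <- ast_twist.
  apply (right_modular_mul_unitK _ _ Hast _ Hu_ast).
Qed.

Lemma twist_morph_ast x y : twist u (ast x y) = ast (twist u x) (twist u y).
Proof.
  assert (Hxy : dot (ast x y) u = ast (dot x u) (dot y u)).
  { rewrite Hdm, Hu_ast. reflexivity. }
  unfold twist.
  rewrite Hxy, (right_modular_medial _ _ Hast), Hu_ast.
  reflexivity.
Qed.

Lemma twist_automorphism : magma_automorphism ast (twist u).
Proof.
  split.
  - exact twist_morph_ast.
  - exists (twist u). split; apply twist_involutive.
Qed.

End Twist.

Theorem theorem5p1 (Q : Type) (dot ast : Q -> Q -> Q) (e ebar : Q)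
  (Hdot : right_modular dot) (Hast : right_modular ast)
  (He : left_unit dot e) (Hebar : left_unit ast ebar) :
  (double_magma dot ast <->
     exists alpha : Q -> Q, magma_automorphism ast alpha /\ involutive_map alpha /\
       forall x y, ast x y = dot (alpha x) y)
  /\
  (double_magma dot ast ->
     forall alpha : Q -> Q, magma_automorphism ast alpha -> involutive_map alpha ->
       (forall x y, ast x y = dot (alpha x) y) ->
       forall x, alpha x = dot (ast x ebar) ebar /\ alpha x = ast (dot x ebar) ebar).
Proof.
  split; [split|].
  - intro Hdm.
    pose proof (double_magma_units_eq _ _ _ _ _ Hdot Hast He Hebar Hdm). subst ebar.
    exists (twist _ dot ast e).
    split; [|split].
    + exact (twist_automorphism _ _ _ _ Hdot Hast He Hebar Hdm).
    + exact (twist_involutive _ _ _ _ Hdot Hast He Hebar Hdm).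
    + exact (ast_twist _ _ _ _ Hdot He Hebar Hdm).
  - intros [alpha [[Hmorph _] [Hinv Htw]]].
    exact (double_magma_of_twist _ _ _ _ Hdot Hmorph Hinv Htw).
  - intros Hdm alpha _ _ Htw x.
    pose proof (double_magma_units_eq _ _ _ _ _ Hdot Hast He Hebar Hdm). subst ebar.
    assert (Halpha : alpha x = dot (ast x e) e).
    { rewrite Htw. symmetry. apply (right_modular_mul_unitK _ _ Hdot _ He). }
    split; [exact Halpha|].
    rewrite Halpha. symmetry. apply (double_magma_mul_unit _ _ _ _ He Hebar Hdm).
Qed.
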